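(* Let $(R,\mathfrak m,k)$ be a one-dimensional analytically irreducible local domain (i.e. the integral closure $\overline R$ of $R$ in its fraction field $Q(R)$ is a finitely generated $R$-module and a local ring, hence a discrete valuation ring with maximal ideal $\mathfrak n$), such that the canonical map $k\to \overline R/\mathfrak n$ is an isomorphism. Let $v$, $a_i$, $n$, $I_i$, $\mathcal T(R)$, $\mathcal I(R)$ be as in the context, and assume $n\ge 3$. Then the following are equivalent: (1) $\mathcal T(R)=\mathcal I(R)$; (2) for each $1\le i\le n-2$ there exists $q_i\in R$ with $v(q_i)=a_i$ and $I_iI_{i+2}=q_iI_{i+2}$; (3) for each $1\le i\le n-2$ and each $q_i\in R$ with $v(q_i)=a_i$, the equality $I_iI_{i+2}=q_iI_{i+2}$ holds. If moreover $k$ is infinite, these are also equivalent to: (4) $\mathcal T(R)$ is a finite set.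
   Context: $v\colon Q(R)\to\mathbb Z\cup\{\infty\}$ is the normalized discrete valuation associated to $\overline R$. The value semigroup $H=v(R)=\{v(r)\mid 0\ne r\in R\}$ is written $H=\{a_0=0<a_1<a_2<\cdots\}$, and $n$ is the smallest integer such that $a_{n+i}=a_n+i$ for all $i\ge0$. For $0\le i\le n$, $I_i=\{r\in R\mid v(r)\ge a_i\}$, and $\mathcal I(R)=\{I_0,\dots,I_n\}$ (these are exactly the integrally closed ideals containing the conductor $R:\overline R$). The trace ideal of an $R$-module $M$ is $\mathrm{tr}_R(M)=\sum_{f\in\mathrm{Hom}_R(M,R)}\mathrm{Im} f$; an ideal is a trace ideal if it equals $\mathrm{tr}_R(M)$ for some $M$. $\mathcal T(R)$ denotes the set of nonzero (equivalently regular) trace ideals of $R$. *)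

From HB Require Import structures.
From mathcomp Require Import all_boot all_order all_algebra.
Set Implicit Arguments. Unset Strict Implicit. Unset Printing Implicit Defensive.
Import Order.TTheory GRing.Theory Num.Theory.
Local Open Scope ring_scope.

Section Defs.
Variable R : idomainType.

Definition QR := {fraction R}.
Definition emb (r : R) : QR := @FracField.tofrac R r.

Definition is_ideal (I : R -> Prop) : Prop :=
  [/\ I 0, (forall x y, I x -> I y -> I (x + y)) & (forall r x, I x -> I (r * x))].

Definition ideal_eq (I J : R -> Prop) : Prop := forall x, I x <-> J x.

Definition ideal_strict_sub (I J : R -> Prop) : Prop :=
  (forall x, I x -> J x) /\ exists x, J x /\ ~ I x.

Definition is_prime_ideal (P : R -> Prop) : Prop :=
  [/\ is_ideal P, ~ P 1 & forall x y, P (x * y) -> P x \/ P y].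

Definition noetherian : Prop :=
  forall I, is_ideal I -> exists (k : nat) (g : 'I_k -> R),
    forall x, I x <-> exists c : 'I_k -> R, x = \sum_(j < k) c j * g j.

(* local ring: the non-units form an ideal (equivalently, are closed under +) *)
Definition local_ring : Prop :=
  forall x y : R, x \isn't a GRing.unit -> y \isn't a GRing.unit ->
              (x + y) \isn't a GRing.unit.

Definition max_ideal (x : R) : Prop := x \isn't a GRing.unit.

Definition krull_dim_one : Prop :=
  (exists P Q, [/\ is_prime_ideal P, is_prime_ideal Q & ideal_strict_sub P Q]) /\
  ~ (exists P Q S, [/\ is_prime_ideal P, is_prime_ideal Q, is_prime_ideal S,
                       ideal_strict_sub P Q & ideal_strict_sub Q S]).

Definition in_Rbar (x : QR) : Prop := integralOver emb x.

Definition Rbar_finite : Prop :=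
  exists (k : nat) (b : 'I_k -> QR), (forall j, in_Rbar (b j)) /\
    forall x, in_Rbar x -> exists c : 'I_k -> R, x = \sum_(j < k) emb (c j) * b j.

Definition Rbar_unit (x : QR) : Prop :=
  in_Rbar x /\ exists y, in_Rbar y /\ x * y = 1.

Definition Rbar_local : Prop :=
  forall x y, in_Rbar x -> in_Rbar y -> ~ Rbar_unit x -> ~ Rbar_unit y ->
    ~ Rbar_unit (x + y).

Definition Rbar_max (x : QR) : Prop := in_Rbar x /\ ~ Rbar_unit x.

(* the canonical map k = R/m -> Rbar/nbar is an isomorphism
   (well-definedness: m maps into nbar; injective; surjective) *)
Definition residue_iso : Prop :=
  [/\ (forall r, max_ideal r -> Rbar_max (emb r)),
      (forall r, Rbar_max (emb r) -> max_ideal r) &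
      (forall x, in_Rbar x -> exists r, Rbar_max (x - emb r))].

(* k = R/m is infinite: no finite set of elements of R represents all classes *)
Definition residue_field_infinite : Prop :=
  ~ exists s : seq R, forall r, exists2 t, t \in s & max_ideal (r - t).

(* ---- the normalized discrete valuation of Q(R) associated to Rbar ----
   v is only meaningful on nonzero elements (v(0) = infinity). *)
Definition normalized_valuation_of_Rbar (v : QR -> int) : Prop :=
  [/\ (forall x y, x != 0 -> y != 0 -> v (x * y) = v x + v y),
      (forall x y, x != 0 -> y != 0 -> x + y != 0 -> Order.min (v x) (v y) <= v (x + y)),
      (forall z : int, exists2 x, x != 0 & v x = z) &
      (forall x, x != 0 -> (in_Rbar x <-> 0 <= v x))].

Definition value_semigroup (v : QR -> int) (h : int) : Prop :=
  exists2 r : R, r != 0 & v (emb r) = h.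

Definition enumerates_H (v : QR -> int) (a : nat -> int) : Prop :=
  (forall i, a i < a i.+1) /\ (forall h, value_semigroup v h <-> exists i, a i = h).

Definition conductor_index (a : nat -> int) (n : nat) : Prop :=
  (forall i, a (n + i)%N = a n + i%:Z) /\
  (forall m, (forall i, a (m + i)%N = a m + i%:Z) -> (n <= m)%N).

Definition Iv (v : QR -> int) (a : nat -> int) (i : nat) (r : R) : Prop :=
  r = 0 \/ a i <= v (emb r).

Definition ideal_mul (I J : R -> Prop) (x : R) : Prop :=
  exists (k : nat) (ys zs : 'I_k -> R),
    [/\ forall j, I (ys j), forall j, J (zs j) & x = \sum_(j < k) ys j * zs j].

Definition elem_mul (q : R) (J : R -> Prop) (x : R) : Prop :=
  exists2 y, J y & x = q * y.

Definition is_hom (M : lmodType R) (f : M -> R) : Prop :=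
  forall (c : R) (x y : M), f (c *: x + y) = c * f x + f y.

(* tr_R(M) = sum of the images of all R-linear maps M -> R *)
Definition trace (M : lmodType R) (x : R) : Prop :=
  exists (k : nat) (fs : 'I_k -> M -> R) (ms : 'I_k -> M),
    (forall j, is_hom (fs j)) /\ x = \sum_(j < k) fs j (ms j).

Definition is_trace_ideal (I : R -> Prop) : Prop :=
  exists M : lmodType R, ideal_eq I (trace M).

Definition in_T (I : R -> Prop) : Prop :=
  is_trace_ideal I /\ exists x, I x /\ x <> 0.

Definition in_I (v : QR -> int) (a : nat -> int) (n : nat) (I : R -> Prop) : Prop :=
  exists2 i, (i <= n)%N & ideal_eq I (Iv v a i).

Definition T_finite : Prop :=
  exists (k : nat) (Js : 'I_k -> (R -> Prop)),
    forall I, in_T I -> exists j, ideal_eq I (Js j).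

End Defs.

From HB Require Import structures.
From mathcomp Require Import all_boot all_order all_algebra.
From mathcomp Require Import zify boolp ring.
Import Order.TTheory GRing.Theory Num.Theory.
Local Open Scope ring_scope.
Set Implicit Arguments. Unset Strict Implicit. Unset Printing Implicit Defensive.

(* A regular ideal I is a trace ideal iff every x in Q(R) with xI ⊆ R satisfies xI ⊆ I.  Each
   I_j, j <= n, has this property: such an x maps the conductor into R, hence lies in Rbar.
   Conversely, a trace ideal I whose least value is a_i contains the conductor, and it is I_i as
   soon as it has elements of all values a_j, j >= i; the condition I_i I_(i+2) = q I_(i+2) gives
   I_(i+2) ⊆ I and then an element of value a_(i+1).  If the condition fails, take i maximal
   where it does: no p of value a_(i+1) satisfies p I_(i+2) ⊆ q I_(i+2), which makes Rq + I_(i+2)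
   a trace ideal different from every I_j, and replacing q by q + r p with r in R gives one such
   ideal per residue class of r.  The condition does not depend on q, since two elements of
   value a_i differ by a unit factor up to I_(i+1). *)

Section Embedding.
Variable R : idomainType.

Lemma emb_repr (x : QR R) : exists a b : R, b != 0 /\ x = emb a / emb b.
Proof.
elim/quotW: x => r; exists r.1, r.2; split; first exact: denom_ratioP.
rewrite /emb; unlock FracField.tofrac.
rewrite -[_^-1]FracField.pi_inv -[_ * _]FracField.pi_mul.
apply/eqmodP; rewrite /= FracField.equivfE /FracField.mulf /FracField.invf.
have r2_neq0 := denom_ratioP r.
by rewrite !numden_Ratio ?mulf_neq0 ?oner_neq0 // !mul1r !mulr1 mulrC.
Qed.

Lemma emb_inj : injective (@emb R).
Proof. by move=> x y /eqP; rewrite tofrac_eq => /eqP. Qed.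

Lemma emb0 : emb (0 : R) = 0. Proof. exact: tofrac0. Qed.
Lemma emb1 : emb (1 : R) = 1. Proof. exact: tofrac1. Qed.
Lemma embD (x y : R) : emb (x + y) = emb x + emb y. Proof. exact: tofracD. Qed.
Lemma embN (x : R) : emb (- x) = - emb x. Proof. exact: tofracN. Qed.
Lemma embB (x y : R) : emb (x - y) = emb x - emb y. Proof. exact: tofracB. Qed.
Lemma embM (x y : R) : emb (x * y) = emb x * emb y. Proof. exact: tofracM. Qed.
Lemma emb_eq0 (x : R) : (emb x == 0) = (x == 0). Proof. exact: tofrac_eq0. Qed.
Lemma emb_neq0 (x : R) : x != 0 -> emb x != 0. Proof. by rewrite emb_eq0. Qed.

Lemma emb_divM (q y z t : R) : q != 0 -> y * z = q * t -> emb y / emb q * emb z = emb t.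
Proof.
move=> q_neq0 yzqt; rewrite mulrAC -embM yzqt embM mulrC mulKf //.
exact: emb_neq0.
Qed.

Lemma emb_sum k (F : 'I_k -> R) : emb (\sum_(j < k) F j) = \sum_(j < k) emb (F j).
Proof. exact: rmorph_sum. Qed.

End Embedding.

Section Ideals.
Variable R : idomainType.
Implicit Types (I J : R -> Prop) (x y : R).

Lemma ideal0 I : is_ideal I -> I 0. Proof. by case. Qed.

Lemma idealD I x y : is_ideal I -> I x -> I y -> I (x + y).
Proof. by case=> _ + _; apply. Qed.

Lemma idealMl I r x : is_ideal I -> I x -> I (r * x).
Proof. by case=> _ _; apply. Qed.

Lemma idealN I x : is_ideal I -> I x -> I (- x).
Proof. by move=> idI Ix; rewrite -mulN1r; apply: idealMl. Qed.

Lemma idealB I x y : is_ideal I -> I x -> I y -> I (x - y).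
Proof. by move=> idI Ix Iy; apply: idealD (idealN _ _). Qed.

Lemma ideal_sum I k (F : 'I_k -> R) : is_ideal I -> (forall j, I (F j)) ->
  I (\sum_(j < k) F j).
Proof.
move=> idI IF; apply: (big_ind I) => [|x y|j _]; [exact: ideal0 | exact: idealD | exact: IF].
Qed.

Lemma is_ideal_eq I J : ideal_eq I J -> is_ideal J -> is_ideal I.
Proof.
move=> eIJ [J0 JD JM]; split; first exact/eIJ.
- by move=> x y /eIJ Jx /eIJ Jy; apply/eIJ/JD.
- by move=> r x /eIJ Jx; apply/eIJ/JM.
Qed.

End Ideals.

Section TraceIdeals.
Variable R : idomainType.
Implicit Types (I J : R -> Prop) (M : lmodType R).

Lemma is_hom0 M (f : M -> R) : is_hom f -> f 0 = 0.
Proof.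
move=> homf; have := homf 1 0 0; rewrite scale1r addr0 mul1r => f0.
by apply: (addrI (f 0)); rewrite addr0 -f0.
Qed.

Lemma is_homZ M (f : M -> R) c m : is_hom f -> f (c *: m) = c * f m.
Proof. by move=> homf; have := homf c m 0; rewrite addr0 is_hom0 // addr0. Qed.

Lemma trace_hom M (f : M -> R) m : is_hom f -> trace M (f m).
Proof. by move=> homf; exists 1%N, (fun=> f), (fun=> m); rewrite big_ord1. Qed.

Lemma trace_is_ideal M : is_ideal (trace M).
Proof.
split.
- exists 0%N, (fun _ _ => 0), (fun=> 0); rewrite big_ord0; split=> // _ c x y.
  by rewrite mulr0 addr0.
- move=> _ _ [k1 [f1 [m1 [hom1 ->]]]] [k2 [f2 [m2 [hom2 ->]]]].
  pose pick T (g1 : 'I_k1 -> T) (g2 : 'I_k2 -> T) j :=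
    match split j with inl j1 => g1 j1 | inr j2 => g2 j2 end.
  exists (k1 + k2)%N, (pick _ f1 f2), (pick _ m1 m2); split.
    by move=> j; rewrite /pick; case: (split j).
  rewrite big_split_ord /pick; congr (_ + _); apply: eq_bigr => j _.
    by rewrite -[lshift _ _]/(unsplit (inl j)) unsplitK.
  by rewrite -[rshift _ _]/(unsplit (inr j)) unsplitK.
- move=> r _ [k [fs [ms [homf ->]]]]; exists k, fs, (fun j => r *: ms j); split=> //.
  by rewrite mulr_sumr; apply: eq_bigr => j _; rewrite is_homZ.
Qed.

Definition maps_into_R (x : QR R) I := forall y, I y -> exists r, x * emb y = emb r.

(* [(R :_Q I) = (I :_Q I)]; for regular ideals this characterises trace ideals. *)
Definition trace_closed I :=
  forall x, maps_into_R x I -> forall y, I y -> exists r, I r /\ x * emb y = emb r.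

Lemma trace_closed_eq M I : ideal_eq I (trace M) -> trace_closed I.
Proof.
move=> eI x xI y /eI [k [fs [ms [homf ->]]]].
have Ifs j m : I (fs j m) by apply/eI/trace_hom.
have [g gP] := choice (fun jm : 'I_k * M => xI _ (Ifs jm.1 jm.2)).
have homg j : is_hom (fun m => g (j, m)).
  move=> c m1 m2; apply: emb_inj.
  rewrite -(gP (j, _)) embD embM -(gP (j, m1)) -(gP (j, m2)) /= homf embD embM.
  ring.
exists (\sum_(j < k) g (j, ms j)); split.
  by apply/eI; exists k, (fun j m => g (j, m)), ms.
by rewrite !emb_sum mulr_sumr; apply: eq_bigr => j _; rewrite (gP (j, _)).
Qed.

Lemma trace_idealP I : is_trace_ideal I -> is_ideal I /\ trace_closed I.
Proof.
by case=> M eI; split; [apply: is_ideal_eq eI (trace_is_ideal M) | apply: trace_closed_eq eI].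
Qed.

Section IdealModule.
Variable J : R -> Prop.

(* Guarding membership by [is_ideal J] makes the predicate closed unconditionally. *)
Definition ideal_mem (r : R^o) : bool := `[< is_ideal J -> J r >].

Lemma ideal_mem_closed : subsemimod_closed ideal_mem.
Proof.
split; [split|].
- by apply/asboolP => -[].
- by move=> x y /asboolP Jx /asboolP Jy; apply/asboolP => idJ; apply: idealD (Jx _) (Jy _).
- by move=> c x /asboolP Jx; apply/asboolP => idJ; apply: idealMl (Jx _).
Qed.

HB.instance Definition _ := GRing.isSubmodClosed.Build R R^o ideal_mem ideal_mem_closed.
Record ideal_elt := IdealElt { ideal_val :> R^o; _ : ideal_val \in ideal_mem }.
HB.instance Definition _ := [isSub for ideal_val].
HB.instance Definition _ := [Choice of ideal_elt by <:].
HB.instance Definition _ := [SubChoice_isSubLmodule of ideal_elt by <:].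

Lemma ideal_val_hom : is_hom (ideal_val : ideal_elt -> R).
Proof. by []. Qed.

Lemma ideal_valP (x : ideal_elt) : is_ideal J -> J (ideal_val x).
Proof. by case: x => y /= /asboolP. Qed.

Lemma ideal_memP (y : R) : J y -> y \in ideal_mem.
Proof. by move=> Jy; apply/asboolP. Qed.

End IdealModule.

Lemma trace_closed_is_trace J : is_ideal J -> (exists q, J q /\ q != 0) ->
  trace_closed J -> is_trace_ideal J.
Proof.
move=> idJ [q [Jq q_neq0]] closedJ; exists (ideal_elt J) => y; split.
  move=> Jy; exists 1%N, (fun=> @ideal_val J), (fun=> IdealElt (ideal_memP Jy)).
  by rewrite big_ord1; split=> // _; apply: ideal_val_hom.
case=> [k [fs [ms [homf ->]]]]; apply: ideal_sum => // j.
pose mq := IdealElt (ideal_memP Jq).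
(* every homomorphism [J -> R] is multiplication by [f q / q] *)
have fE (m : ideal_elt J) : q * fs j m = ideal_val m * fs j mq.
  by rewrite -!is_homZ //; congr (fs j _); apply: val_inj; exact: mulrC.
pose x := emb (fs j mq) / emb q.
have xE (m : ideal_elt J) : x * emb (ideal_val m : R) = emb (fs j m).
  by rewrite mulrAC -embM [fs j mq * _]mulrC -fE embM mulrC mulKf ?emb_neq0.
have xJ : maps_into_R x J.
  by move=> z Jz; exists (fs j (IdealElt (ideal_memP Jz))); exact: (xE (IdealElt _)).
have [r [Jr]] := closedJ x xJ _ (ideal_valP (ms j) idJ).
by rewrite xE => /emb_inj ->.
Qed.

Lemma trace_closed_div_mem I q z : trace_closed I -> I q -> q != 0 ->
  maps_into_R (emb z / emb q) I -> I z.
Proof.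
move=> closedI Iq q_neq0 zqI; have [r [Ir]] := closedI _ zqI q Iq.
by rewrite divfK ?emb_neq0 // => /emb_inj ->.
Qed.

End TraceIdeals.

Section ValueSemigroup.
Variables (R : idomainType) (v : QR R -> int) (a : nat -> int) (n : nat).
Hypotheses (Hfin : Rbar_finite R) (Hres : residue_iso R)
  (Hv : normalized_valuation_of_Rbar v) (Ha : enumerates_H v a)
  (Hn : conductor_index a n).

Local Notation Q := (QR R).
Local Notation w r := (v (emb r)).
Local Notation c := (a n).

Lemma valM (x y : Q) : x != 0 -> y != 0 -> v (x * y) = v x + v y.
Proof. by case: Hv => + _ _ _; apply. Qed.

Lemma val_min (x y : Q) : x != 0 -> y != 0 -> x + y != 0 ->
  Order.min (v x) (v y) <= v (x + y).
Proof. by case: Hv => _ + _ _; apply. Qed.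

Lemma val_surj (z : int) : exists2 x : Q, x != 0 & v x = z.
Proof. by case: Hv => _ _ + _; apply. Qed.

Lemma in_Rbar_val (x : Q) : x != 0 -> in_Rbar x <-> 0 <= v x.
Proof. by case: Hv => _ _ _; apply. Qed.

Lemma val1 : v 1 = 0.
Proof.
have := valM (oner_neq0 Q) (oner_neq0 Q); rewrite mulr1 => v11.
by apply: (addrI (v 1)); rewrite addr0 -v11.
Qed.

Lemma valV (x : Q) : x != 0 -> v x^-1 = - v x.
Proof. by move=> x_neq0; have := valM x_neq0 (invr_neq0 x_neq0); rewrite mulfV // val1; lia. Qed.

Lemma val_div (x y : Q) : x != 0 -> y != 0 -> v (x / y) = v x - v y.
Proof. by move=> x_neq0 y_neq0; rewrite valM ?invr_eq0 // valV. Qed.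

Lemma valN (x : Q) : v (- x) = v x.
Proof.
have N1_neq0 : (-1 : Q) != 0 by rewrite oppr_eq0 oner_neq0.
have valN1 : v (-1) = 0 by have := valM N1_neq0 N1_neq0; rewrite mulrNN mulr1 val1; lia.
have [->|x_neq0] := eqVneq x 0; first by rewrite oppr0.
by rewrite -mulN1r valM // valN1 add0r.
Qed.

Lemma valD_lt (x y : Q) : x != 0 -> y != 0 -> v x < v y -> x + y != 0 /\ v (x + y) = v x.
Proof.
move=> x_neq0 y_neq0 lt_xy.
have xy_neq0 : x + y != 0.
  by apply: contraTneq lt_xy => /(canRL (addKr x)); rewrite addr0 => ->; rewrite valN ltxx.
split=> //; have ny_neq0 : - y != 0 by rewrite oppr_eq0.
have := val_min x_neq0 y_neq0 xy_neq0.
have := val_min xy_neq0 ny_neq0; rewrite addrK valN => /(_ x_neq0).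
lia.
Qed.

Lemma valD_ge (x y : Q) b : x + y != 0 -> (x != 0 -> b <= v x) -> (y != 0 -> b <= v y) ->
  b <= v (x + y).
Proof.
move=> xy_neq0 bx b_y; have [x0|x_neq0] := eqVneq x 0.
  by move: xy_neq0; rewrite x0 add0r => /b_y.
have [y0|y_neq0] := eqVneq y 0; first by move: xy_neq0; rewrite y0 addr0 => /bx.
by have := val_min x_neq0 y_neq0 xy_neq0; have := bx x_neq0; have := b_y y_neq0; lia.
Qed.

Lemma Rbar_max_val (z : Q) : Rbar_max z -> z = 0 \/ 0 < v z.
Proof.
case=> Rz z_nunit; have [->|z_neq0] := eqVneq z 0; [by left | right].
rewrite lt_def (in_Rbar_val z_neq0).1 // andbT; apply: contra_notN z_nunit => /eqP vz0.
split=> //; exists z^-1; split; last by rewrite mulfV.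
by apply/in_Rbar_val; rewrite ?invr_eq0 // valV // vz0 oppr0.
Qed.

Lemma wM (r s : R) : r != 0 -> s != 0 -> w (r * s) = w r + w s.
Proof. by move=> r_neq0 s_neq0; rewrite embM valM ?emb_neq0. Qed.

Lemma wN (r : R) : w (- r) = w r.
Proof. by rewrite embN valN. Qed.

Lemma wB_lt (r s : R) : r != 0 -> s != 0 -> w r < w s -> r - s != 0 /\ w (r - s) = w r.
Proof.
move=> r_neq0 s_neq0 lt_rs.
have Ns_neq0 : - emb s != 0 by rewrite oppr_eq0 emb_neq0.
have lt_rNs : w r < v (- emb s) by rewrite valN.
by have [] := valD_lt (emb_neq0 r_neq0) Ns_neq0 lt_rNs; rewrite -embN -embD emb_eq0.
Qed.

Lemma a_lt i j : (i < j)%N -> a i < a j.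
Proof.
case: Ha => a_incr _; elim: j => // j IH; rewrite ltnS leq_eqVlt => /orP[/eqP ->|/IH lt_ij].
  exact: a_incr.
exact: lt_trans lt_ij (a_incr j).
Qed.

Lemma a_le i j : (i <= j)%N -> a i <= a j.
Proof. by rewrite leq_eqVlt => /orP[/eqP ->//|/a_lt/ltW]. Qed.

Lemma a_le_inv i j : a i <= a j -> (i <= j)%N.
Proof. by apply: contraTT; rewrite -!ltnNge -ltNge; apply: a_lt. Qed.

Lemma a_lt_inv i j : a i < a j -> (i < j)%N.
Proof. by apply: contraTT; rewrite -!leqNgt -leNgt; apply: a_le. Qed.

Lemma w_in_H (r : R) : r != 0 -> exists j, a j = w r.
Proof. by move=> r_neq0; case: Ha => _ /(_ (w r)) [+ _]; apply; exists r. Qed.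

Lemma a_attained j : exists2 r : R, r != 0 & w r = a j.
Proof. by case: Ha => _ /(_ (a j)) [_ /(_ (ex_intro _ j erefl))]. Qed.

Lemma a0 : a 0 = 0.
Proof.
have [j aj] := w_in_H (oner_neq0 R); rewrite emb1 val1 in aj.
have [r r_neq0 wr] := a_attained 0.
have [k ak] := w_in_H (mulf_neq0 r_neq0 r_neq0); rewrite wM // wr in ak.
by have := a_le (leq0n j); have := a_le (leq0n k); lia.
Qed.

Lemma w_ge0 (r : R) : r != 0 -> 0 <= w r.
Proof. by move=> /w_in_H [j <-]; rewrite -a0 a_le. Qed.

Lemma a_conductor i : a (n + i) = c + i%:Z.
Proof. by case: Hn => + _; apply. Qed.

Lemma conductor_in_H (h : int) : c <= h -> exists j, a j = h.
Proof.
move=> le_ch; exists (n + `|h - c|)%N; rewrite a_conductor.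
by rewrite gez0_abs; lia.
Qed.

Lemma conductor_predNH (r : R) : r != 0 -> w r <> c - 1.
Proof.
move=> r_neq0 wr; have [m am] := w_in_H r_neq0; rewrite wr in am.
have lt_mn : (m < n)%N by apply: a_lt_inv; lia.
have an1 : a n.-1 = c - 1.
  have le_mn1 : (m <= n.-1)%N by lia.
  have lt_n1n : (n.-1 < n)%N by lia.
  by have := a_le le_mn1; have := a_lt lt_n1n; lia.
have : (n <= n.-1)%N.
  case: Hn => _; apply => -[|i]; first by rewrite addn0 addr0.
  by rewrite (_ : (n.-1 + i.+1 = n + i)%N) ?a_conductor ?an1; lia.
by lia.
Qed.

Lemma unit_of_w0 (r : R) : r != 0 -> w r = 0 -> r \is a GRing.unit.
Proof.
move=> r_neq0 wr0; apply: contraT => r_nunit; case: Hres => + _ _ => /(_ r r_nunit).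
case/Rbar_max_val => [/eqP|]; last by rewrite wr0 ltxx.
by rewrite emb_eq0 (negPf r_neq0).
Qed.

Lemma w_unit (u : R) : u \is a GRing.unit -> u != 0 /\ w u = 0.
Proof.
move=> u_unit; have u_neq0 : u != 0 by apply: contraTneq u_unit => ->; rewrite unitr0.
have ui_neq0 : u^-1 != 0 by rewrite invr_eq0.
split=> //; have := wM u_neq0 ui_neq0; rewrite mulrV // emb1 val1.
by have := w_ge0 u_neq0; have := w_ge0 ui_neq0; lia.
Qed.

(* [x / y] lies in [Rbar] and has value [0]; as [k = Rbar/nbar], it is congruent modulo [nbar]
   to some [s] in [R]. *)
Lemma residue_approx (x : Q) (y : R) : x != 0 -> y != 0 -> v x = w y ->
  exists s, x - emb (s * y) != 0 -> v x < v (x - emb (s * y)).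
Proof.
move=> x_neq0 y_neq0 vxy; have ey_neq0 := emb_neq0 y_neq0.
pose z := x / emb y.
have z_neq0 : z != 0 by rewrite mulf_neq0 ?invr_eq0.
have Rz : in_Rbar z by apply/in_Rbar_val; rewrite // val_div // vxy subrr.
case: Hres => _ _ /(_ z Rz) [s zs]; exists s.
have -> : x - emb (s * y) = emb y * (z - emb s).
  by rewrite embM mulrBr mulrCA divff // mulr1 mulrC.
rewrite mulf_eq0 negb_or ey_neq0 /= => zs_neq0.
case: (Rbar_max_val zs) zs_neq0 => [->|vzs_gt0 zs_neq0]; first by rewrite eqxx.
by rewrite valM // -vxy ltrDl.
Qed.

Lemma residue_approxR (r y : R) : r != 0 -> y != 0 -> w r = w y ->
  exists s, r - s * y != 0 -> w r < w (r - s * y).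
Proof.
move=> r_neq0 y_neq0 wry; have [s sP] := residue_approx (emb_neq0 r_neq0) y_neq0 wry.
by exists s; rewrite embB -emb_eq0 embB.
Qed.

Lemma Rbar_common_denom :
  exists2 d : R, d != 0 & forall x, in_Rbar x -> exists r, emb d * x = emb r.
Proof.
case: Hfin => k [b [_ b_gen]].
have /fin_all_exists [f fP] j : exists p : R * R, p.2 != 0 /\ b j = emb p.1 / emb p.2.
  by have [x [y]] := emb_repr (b j); exists (x, y).
exists (\prod_j (f j).2); first by apply/prodf_neq0 => j _; case: (fP j).
move=> _ /b_gen [cf ->]; exists (\sum_j cf j * ((f j).1 * \prod_(l | l != j) (f l).2)).
rewrite mulr_sumr emb_sum; apply: eq_bigr => j _; case: (fP j) => fj_neq0 ->.
rewrite (bigD1 j) //= !embM /emb rmorph_prod /=.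
by field; rewrite tofrac_eq0.
Qed.

Lemma conductor_sub_R (x : Q) : x != 0 -> c <= v x -> exists r, x = emb r.
Proof.
have [d d_neq0 dP] := Rbar_common_denom; have ed_neq0 := emb_neq0 d_neq0.
have large y : y != 0 -> v (emb d) <= v y -> exists r, y = emb r.
  move=> y_neq0 le_dy; have yd_neq0 : y / emb d != 0 by rewrite mulf_neq0 ?invr_eq0.
  have [|r dr] := dP (y / emb d); last by exists r; rewrite -dr mulrC divfK.
  by apply/in_Rbar_val; rewrite // val_div //; lia.
(* Subtract elements of [R] of the same value until it reaches [v d]; then use [d Rbar ⊆ R]. *)
suff: forall N : nat, forall y,
    y != 0 -> c <= v y -> v (emb d) - v y <= N%:Z -> exists r, y = emb r.
  by move=> + x_neq0 le_cx => /(_ `|v (emb d) - v x|%N x x_neq0 le_cx); apply; lia.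
elim=> [|N IH] y y_neq0 le_cy leN; first by apply: large => //; lia.
have [j aj] := conductor_in_H le_cy; have [r r_neq0 wr] := a_attained j.
have [s sP] := residue_approx y_neq0 r_neq0 (esym (etrans wr aj)).
set ys := y - emb (s * r) in sP.
have [ys0|ys_neq0] := eqVneq ys 0.
  by exists (s * r); apply/eqP; rewrite -subr_eq0 -/ys ys0.
have lt_y := sP ys_neq0.
have [|r' yr'] := IH _ ys_neq0 (le_trans le_cy (ltW lt_y)); first by lia.
by exists (r' + s * r); rewrite embD -yr' /ys subrK.
Qed.

Lemma conductor_dvd (x q : R) : q != 0 -> c <= w x - w q -> exists r, x = q * r.
Proof.
move=> q_neq0 le_c; have [->|x_neq0] := eqVneq x 0; first by exists 0; rewrite mulr0.
have emb_q_neq0 := emb_neq0 q_neq0.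
have xq_neq0 : emb x / emb q != 0 by rewrite mulf_neq0 ?invr_eq0 ?emb_neq0.
have le_cxq : c <= v (emb x / emb q) by rewrite val_div ?emb_neq0.
have [r xqr] := conductor_sub_R xq_neq0 le_cxq.
by exists r; apply: emb_inj; rewrite embM -xqr mulrC divfK.
Qed.

Lemma colon_conductor_ge0 (x : Q) : x != 0 -> maps_into_R x (Iv v a n) -> 0 <= v x.
Proof.
(* otherwise [x] maps an element of the conductor to the gap [c - 1] *)
move=> x_neq0 xC; rewrite leNgt; apply/negP => vx_lt0.
have [z z_neq0 vz] := val_surj (c - 1 - v x).
have [|y ey] := conductor_sub_R z_neq0; first by rewrite vz; lia.
have y_neq0 : y != 0 by rewrite -emb_eq0 -ey.
have [|r er] := xC y; first by right; rewrite -ey vz; lia.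
have r_neq0 : r != 0 by rewrite -emb_eq0 -er mulf_neq0 ?emb_neq0.
by apply: (conductor_predNH r_neq0); rewrite -er valM ?emb_neq0 // -ey vz; lia.
Qed.

Lemma Iv_ideal j : is_ideal (Iv v a j).
Proof.
split; first by left.
- move=> x y Ix Iy; have [|xy_neq0] := eqVneq (x + y) 0; [by left | right].
  rewrite embD; apply: valD_ge; first by rewrite -embD emb_neq0.
  + by case: Ix => [->|]; rewrite ?emb0 ?eqxx.
  + by case: Iy => [->|]; rewrite ?emb0 ?eqxx.
- move=> r x [->|le_x]; first by left; rewrite mulr0.
  have [->|r_neq0] := eqVneq r 0; first by left; rewrite mul0r.
  have [->|x_neq0] := eqVneq x 0; first by left; rewrite mulr0.
  by right; rewrite wM //; have := w_ge0 r_neq0; lia.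
Qed.

Lemma Iv_mono j k r : (j <= k)%N -> Iv v a k r -> Iv v a j r.
Proof. by move=> le_jk [->|le_kr]; [left | right; apply: le_trans le_kr; apply: a_le]. Qed.

Lemma Iv_val j r : r != 0 -> Iv v a j r -> a j <= w r.
Proof. by move=> r_neq0 [r0|//]; rewrite r0 eqxx in r_neq0. Qed.

Lemma Iv_succ j r : r != 0 -> a j < w r -> Iv v a j.+1 r.
Proof.
move=> r_neq0 lt_jr; right; have [k ak] := w_in_H r_neq0.
by rewrite -ak in lt_jr *; apply/a_le/a_lt_inv.
Qed.

Lemma Iv_next j y : Iv v a j.+1 y -> (y != 0 -> w y != a j.+1) -> Iv v a j.+2 y.
Proof.
move=> Iy neq_y; have [->|y_neq0] := eqVneq y 0; first by left.
by apply: Iv_succ; rewrite // lt_def (neq_y y_neq0) Iv_val.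
Qed.

Lemma val_sub_Iv_succ j p u : p != 0 -> w p = a j -> Iv v a j.+1 (p - u) ->
  u != 0 /\ w u = a j.
Proof.
move=> p_neq0 wp Ipu; have [pu0|pu_neq0] := eqVneq (p - u) 0.
  by move/eqP: pu0; rewrite subr_eq0 => /eqP <-.
have lt_p_pu : w p < w (p - u).
  by rewrite wp; apply: lt_le_trans (a_lt (ltnSn j)) (Iv_val pu_neq0 Ipu).
by have [] := wB_lt p_neq0 pu_neq0 lt_p_pu; rewrite opprB addrC subrK wp.
Qed.

Lemma Iv_decomp i q y : q != 0 -> w q = a i -> Iv v a i y -> exists s, Iv v a i.+1 (y - s * q).
Proof.
move=> q_neq0 wq Iy; have [->|y_neq0] := eqVneq y 0; first by exists 0; left; rewrite mul0r subr0.
have [wy|wy_neq] := eqVneq (w y) (a i); last first.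
  by exists 0; rewrite mul0r subr0; apply: Iv_succ; rewrite // lt_def wy_neq Iv_val.
have [s sP] := residue_approxR y_neq0 q_neq0 (etrans wy (esym wq)); exists s.
have [->|ys_neq0] := eqVneq (y - s * q) 0; first by left.
by apply: Iv_succ; rewrite // -wy sP.
Qed.

Lemma conductor_ind (P : R -> Prop) :
  (forall r, r != 0 -> c <= w r -> P r) ->
  (forall r, r != 0 -> w r < c -> (forall r', r' != 0 -> w r < w r' -> P r') -> P r) ->
  forall r, r != 0 -> P r.
Proof.
move=> Plarge Pstep; suff: forall N : nat, forall r, r != 0 -> c - w r <= N%:Z -> P r.
  by move=> + r r_neq0 => /(_ `|c - w r|%N r r_neq0); apply; lia.
elim=> [|N IH] r r_neq0 leN; first by apply: Plarge => //; lia.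
have [le_cr|lt_rc] := lerP c (w r); first exact: Plarge.
by apply: Pstep => // r' r'_neq0 lt_rr'; apply: IH => //; lia.
Qed.

Lemma Iv_sub_of_attained (J : R -> Prop) b : is_ideal J -> (forall r, Iv v a n r -> J r) ->
  (forall j, (b <= j < n)%N -> exists2 y, J y & y != 0 /\ w y = a j) ->
  forall r, Iv v a b r -> J r.
Proof.
move=> idJ CJ attJ r; have [->|] := eqVneq r 0; first by move=> _; apply: ideal0.
move: r; apply: conductor_ind => [r r_neq0 le_cr _ | r r_neq0 lt_rc IH Ir].
  by apply: CJ; right.
have [j aj] := w_in_H r_neq0.
have [|y Jy [y_neq0 wy]] := attJ j.
  by apply/andP; split; [apply: a_le_inv; rewrite aj Iv_val | apply: a_lt_inv; rewrite aj].
have [s sP] := residue_approxR r_neq0 y_neq0 (etrans (esym aj) (esym wy)).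
rewrite -(subrK (s * y) r); apply: idealD (idealMl _ idJ Jy) => //.
have [->|rs_neq0] := eqVneq (r - s * y) 0; first exact: ideal0.
apply: IH (sP rs_neq0) _ => //; right; have := Iv_val r_neq0 Ir; have := sP rs_neq0; lia.
Qed.

Lemma Iv_frac_mul j (x : Q) z r : 0 <= v x -> x * emb z = emb r -> Iv v a j z -> Iv v a j r.
Proof.
move=> vx_ge0 xzr Iz; have [->|r_neq0] := eqVneq r 0; first by left.
have : x * emb z != 0 by rewrite xzr emb_neq0.
rewrite mulf_eq0 negb_or emb_eq0 => /andP[x_neq0 z_neq0].
by right; rewrite -xzr valM ?emb_neq0 //; have := Iv_val z_neq0 Iz; lia.
Qed.

Lemma Iv_trace_closed j : (j <= n)%N -> trace_closed (Iv v a j).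
Proof.
move=> le_jn x xI y Iy; have [r xyr] := xI y Iy; exists r; split=> //.
have [x0|x_neq0] := eqVneq x 0; first by left; apply: emb_inj; rewrite -xyr x0 mul0r emb0.
apply: Iv_frac_mul xyr Iy; apply: colon_conductor_ge0 => // z Cz.
exact/xI/(Iv_mono le_jn).
Qed.

Lemma Iv_in_T j : (j <= n)%N -> in_T (Iv v a j).
Proof.
move=> le_jn; have [r r_neq0 wr] := a_attained j.
have Ir : Iv v a j r by right; rewrite wr.
split; last by exists r; split=> //; apply/eqP.
apply: trace_closed_is_trace; [exact: Iv_ideal | by exists r | exact: Iv_trace_closed].
Qed.

Lemma in_I_T (J : R -> Prop) : in_I v a n J -> in_T J.
Proof.
case=> i le_in eJ; have [[M eM] [x [Ix x_neq0]]] := Iv_in_T le_in.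
by split; [exists M => y; apply: iff_trans (eJ y) (eM y) | exists x; split=> //; apply/eJ].
Qed.

Lemma min_val_elt (J : R -> Prop) : (exists x, J x /\ x <> 0) ->
  exists i q, [/\ J q, q != 0, w q = a i & forall y, J y -> Iv v a i y].
Proof.
case=> x [Jx /eqP x_neq0].
have attained : exists j, `[< exists2 y, J y & y != 0 /\ w y = a j >].
  by have [j aj] := w_in_H x_neq0; exists j; apply/asboolP; exists x.
case: (ex_minnP attained) => i /asboolP [q Jq [q_neq0 wq]] min_i.
exists i, q; split=> // y Jy; have [->|y_neq0] := eqVneq y 0; [by left | right].
have [k ak] := w_in_H y_neq0; rewrite -ak; apply/a_le/min_i/asboolP.
by exists y.
Qed.

Definition mul_sub (p q : R) (J : R -> Prop) := forall z, J z -> exists t, J t /\ p * z = q * t.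

Definition prodIv_eq i q := forall y, Iv v a i y -> mul_sub y q (Iv v a i.+2).

Lemma prodIv_eqP i q : Iv v a i q -> prodIv_eq i q <->
  ideal_eq (ideal_mul (Iv v a i) (Iv v a i.+2)) (elem_mul q (Iv v a i.+2)).
Proof.
move=> Iq; split=> [prod_eq x | eq_prod y Iy z Iz]; last first.
  have [|t It ->] := (eq_prod (y * z)).1; last by exists t.
  by exists 1%N, (fun=> y), (fun=> z); rewrite big_ord1.
split=> [[k [ys [zs [Iys Izs ->]]]] | [t It ->]]; last first.
  by exists 1%N, (fun=> q), (fun=> t); rewrite big_ord1.
apply: (big_ind (elem_mul q (Iv v a i.+2))) => [|_ _ [t1 It1 ->] [t2 It2 ->] | j _].
- by exists 0; [left | rewrite mulr0].
- by exists (t1 + t2); [apply: idealD (Iv_ideal _) It1 It2 | rewrite mulrDr].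
- by have [t [It ->]] := prod_eq _ (Iys j) _ (Izs j); exists t.
Qed.

Section TraceIdealWithMinimalValue.
Variables (J : R -> Prop) (i : nat) (q : R).
Hypotheses (closedJ : trace_closed J) (Jq : J q) (q_neq0 : q != 0) (wq : w q = a i)
  (JIv : forall y, J y -> Iv v a i y).

Lemma trace_conductor_sub r : Iv v a n r -> J r.
Proof.
move=> Cr; apply: trace_closed_div_mem Jq q_neq0 _ => // y Jy.
have [->|y_neq0] := eqVneq y 0; first by exists 0; rewrite emb0 mulr0.
have [->|r_neq0] := eqVneq r 0; first by exists 0; rewrite emb0 !mul0r.
have [|t ryqt] := conductor_dvd (x := r * y) q_neq0; last by exists t; apply: emb_divM.
rewrite wM // wq; have := Iv_val r_neq0 Cr; have := Iv_val y_neq0 (JIv Jy); lia.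
Qed.

Lemma trace_prodIv_sub : prodIv_eq i q -> forall z, Iv v a i.+2 z -> J z.
Proof.
move=> prod_eq z Iz; apply: trace_closed_div_mem Jq q_neq0 _ => // y Jy.
have [t [_ yzqt]] := prod_eq y (JIv Jy) z Iz.
by exists t; apply: emb_divM; rewrite // mulrC.
Qed.

(* Otherwise [J = Rq + I_(i+2)], so [p / q] maps [J] into [R] for [p] of value [a_(i+1)],
   which forces [p] into [J]. *)
Lemma trace_attains_next : is_ideal J -> prodIv_eq i q ->
  exists2 y, J y & y != 0 /\ w y = a i.+1.
Proof.
move=> idJ prod_eq; apply: contrapT => none.
have [p p_neq0 wp] := a_attained i.+1.
have J_decomp y : J y -> exists s, Iv v a i.+2 (y - s * q).
  move=> Jy; have [s Is] := Iv_decomp q_neq0 wq (JIv Jy); exists s.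
  apply: (Iv_next Is) => ys_neq0; apply/eqP => wys; apply: none.
  by exists (y - s * q) => //; apply: idealB (idealMl _ idJ Jq).
apply: none; exists p => //; apply: trace_closed_div_mem Jq q_neq0 _ => // y Jy.
have [s Iys] := J_decomp y Jy.
have Ip : Iv v a i p by right; rewrite wp; apply/a_le.
have [t [_ pyqt]] := prod_eq p Ip _ Iys.
exists (s * p + t); rewrite -(subrK (s * q) y) embD mulrDr (emb_divM q_neq0 pyqt).
by rewrite addrC embD; congr (_ + _); rewrite !embM mulrCA divfK ?emb_neq0.
Qed.

End TraceIdealWithMinimalValue.

Definition prodIv_all := forall i, (1 <= i)%N -> (i <= n - 2)%N ->
  forall q, q != 0 -> w q = a i -> prodIv_eq i q.

Lemma trace_ideal_is_Iv (J : R -> Prop) : prodIv_all -> in_T J -> in_I v a n J.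
Proof.
move=> prod_all [/trace_idealP [idJ closedJ] J_neq0].
have [i [q [Jq q_neq0 wq JIv]]] := min_val_elt J_neq0.
have CJ := trace_conductor_sub closedJ Jq q_neq0 wq JIv.
have [le_ni|lt_in] := leqP n i.
  by exists n => // y; split=> [/JIv/Iv_mono|/CJ]; apply.
exists i; first exact: ltnW.
move=> y; split=> [/JIv // |]; apply: Iv_sub_of_attained => // j /andP[le_ij lt_jn].
have [->|ne_ji] := eqVneq j i; first by exists q.
have [r r_neq0 wr] := a_attained j.
case: i => [|i] in Jq q_neq0 wq JIv CJ le_ij lt_in ne_ji *.
  by exists (r * q); [apply: idealMl | rewrite mulf_neq0 // wM // wr wq a0 addr0].
have prod_eq : prodIv_eq i.+1 q by apply: prod_all => //; lia.
have [->|ne_ji2] := eqVneq j i.+2.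
  exact: (trace_attains_next closedJ Jq q_neq0 wq JIv idJ prod_eq).
exists r => //; apply: (trace_prodIv_sub closedJ Jq q_neq0 JIv prod_eq).
by right; rewrite wr; apply: a_le; lia.
Qed.

Lemma Iv_quot j (y z q t : R) : q != 0 -> w q <= w y -> y * z = q * t -> Iv v a j z ->
  Iv v a j t.
Proof.
move=> q_neq0 le_qy yzqt Iz; have [->|t_neq0] := eqVneq t 0; first by left.
have qt_neq0 : q * t != 0 by rewrite mulf_neq0.
have y_neq0 : y != 0 by apply: contraNneq qt_neq0 => y0; rewrite -yzqt y0 mul0r.
have z_neq0 : z != 0 by apply: contraNneq qt_neq0 => z0; rewrite -yzqt z0 mulr0.
have := congr1 (fun x => w x) yzqt; rewrite /= !wM // => wyz.
by right; have := Iv_val z_neq0 Iz; lia.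
Qed.

Lemma mul_sub_trans (y q q' : R) (J : R -> Prop) : mul_sub y q J -> mul_sub q q' J ->
  mul_sub y q' J.
Proof.
move=> yq qq' z Jz; have [t [Jt ->]] := yq z Jz.
by have [t' [Jt' ->]] := qq' t Jt; exists t'.
Qed.

Lemma prodIv_eq_high i q : (n <= i.+2)%N -> q != 0 -> w q = a i -> prodIv_eq i q.
Proof.
move=> le_n q_neq0 wq y Iy z Iz.
have [->|y_neq0] := eqVneq y 0; first by exists 0; split; [left | rewrite mul0r mulr0].
have [->|z_neq0] := eqVneq z 0; first by exists 0; split; [left | rewrite !mulr0].
have le_qy : w q <= w y by rewrite wq Iv_val.
have [|t yzqt] := conductor_dvd (x := y * z) q_neq0.
  by rewrite wM //; have := Iv_val z_neq0 Iz; have := a_le le_n; lia.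
by exists t; split=> //; apply: Iv_quot q_neq0 le_qy yzqt Iz.
Qed.

(* For [y1] in [I_(i+1)]: [p y1 z = y1 q u] with [u] in [I_(i+3)], and [y1 u] is in [p I_(i+3)]. *)
Lemma prodIv_eq_step i q p : q != 0 -> w q = a i -> p != 0 -> w p = a i.+1 ->
  mul_sub p q (Iv v a i.+2) -> prodIv_eq i.+1 p -> prodIv_eq i q.
Proof.
move=> q_neq0 wq p_neq0 wp pq prod_eq y Iy z Iz.
have high y1 : Iv v a i.+1 y1 -> exists t, Iv v a i.+2 t /\ y1 * z = q * t.
  move=> Iy1; have [u [Iu pzqu]] := pq z Iz.
  have Iu3 : Iv v a i.+3 u.
    have [->|u_neq0] := eqVneq u 0; first by left.
    have z_neq0 : z != 0.
      apply: contraNneq u_neq0 => z0; move: pzqu; rewrite z0 mulr0 => /esym/eqP.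
      by rewrite mulf_eq0 (negPf q_neq0).
    have := congr1 (fun x => w x) pzqu; rewrite /= !wM // wp wq => wu.
    by apply: Iv_succ => //; have := Iv_val z_neq0 Iz; have := a_lt (ltnSn i); lia.
  have [t [It y1upt]] := prod_eq y1 Iy1 u Iu3.
  exists t; split; first exact: Iv_mono It.
  by apply: (mulfI p_neq0); rewrite mulrCA pzqu mulrCA y1upt mulrCA.
have [s Iys] := Iv_decomp q_neq0 wq Iy; have [t [It ysz]] := high _ Iys.
exists (s * z + t); split; first by apply: idealD (Iv_ideal _) (idealMl _ (Iv_ideal _) Iz) It.
by rewrite mulrDr -ysz; ring.
Qed.

Lemma Iv_unit_decomp i q q' : q != 0 -> w q = a i -> q' != 0 -> w q' = a i ->
  exists2 s, s \is a GRing.unit & Iv v a i.+1 (q' - s * q).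
Proof.
move=> q_neq0 wq q'_neq0 wq'; have Iq' : Iv v a i q' by right; rewrite wq'.
have [s Ie] := Iv_decomp q_neq0 wq Iq'; exists s => //.
have [sq_neq0 w_sq] := val_sub_Iv_succ q'_neq0 wq' Ie.
have s_neq0 : s != 0 by apply: contraNneq sq_neq0 => ->; rewrite mul0r.
by apply: unit_of_w0 => //; move: w_sq; rewrite wM // wq; lia.
Qed.

(* Write [q' = s q + e] with [s] a unit and [e] in [I_(i+1)]; then [q z = q' (z / s) - q (u / s)]
   with [e z = q u], and [u] has larger value than [z]: descend to the conductor. *)
Lemma mul_sub_of_prodIv i q q' : q != 0 -> w q = a i -> q' != 0 -> w q' = a i ->
  prodIv_eq i q -> mul_sub q q' (Iv v a i.+2).
Proof.
move=> q_neq0 wq q'_neq0 wq' prod_eq.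
have [s s_unit Ie] := Iv_unit_decomp q_neq0 wq q'_neq0 wq'; set e := q' - s * q in Ie.
have si_unit : s^-1 \is a GRing.unit by rewrite unitrV.
have [si_neq0 wsi] := w_unit si_unit.
move=> z; have [->|z_neq0] := eqVneq z 0; first by exists 0; split; [left | rewrite !mulr0].
move: z z_neq0; apply: conductor_ind => [z z_neq0 le_cz Iz | z z_neq0 _ IH Iz].
  have [|t qzq't] := conductor_dvd (x := q * z) q'_neq0; first by rewrite wM // wq wq'; lia.
  by exists t; split=> //; apply: Iv_quot q'_neq0 _ qzq't Iz; rewrite wq wq'.
have [u [Iu ezqu]] := prod_eq e (Iv_mono (leqnSn i) Ie) z Iz.
have [z2 [Iz2 qu'q'z2]] : exists z2, Iv v a i.+2 z2 /\ q * - (s^-1 * u) = q' * z2.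
  have [u0|u_neq0] := eqVneq u 0.
    by exists 0; split; [left | rewrite u0 mulr0 oppr0 !mulr0].
  have e_neq0 : e != 0.
    apply: contraNneq u_neq0 => e0; move/esym/eqP: ezqu.
    by rewrite e0 mul0r mulf_eq0 (negPf q_neq0).
  have Iu' : Iv v a i.+2 (- (s^-1 * u)) by apply: idealN (Iv_ideal _) (idealMl _ (Iv_ideal _) Iu).
  have u'_neq0 : - (s^-1 * u) != 0 by rewrite oppr_eq0 mulf_neq0.
  apply: IH u'_neq0 _ Iu'.
  have := congr1 (fun x => w x) ezqu; rewrite /= !wM // wN wM // wsi add0r.
  by have := Iv_val e_neq0 Ie; have := a_lt (ltnSn i); lia.
exists (s^-1 * z + z2); split; first exact: idealD (Iv_ideal _) (idealMl _ (Iv_ideal _) Iz) Iz2.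
have -> : q' * (s^-1 * z + z2) = q * z * (s * s^-1) + s^-1 * (e * z - q * u).
  by rewrite mulrDr -qu'q'z2 -[q'](subrK (s * q)) -/e; ring.
by rewrite ezqu subrr mulr0 addr0 mulrV // mulr1.
Qed.

Lemma prodIv_eq_indep i q q' : q != 0 -> w q = a i -> q' != 0 -> w q' = a i ->
  prodIv_eq i q -> prodIv_eq i q'.
Proof.
move=> q_neq0 wq q'_neq0 wq' prod_eq y Iy.
exact: mul_sub_trans (prod_eq y Iy) (mul_sub_of_prodIv q_neq0 wq q'_neq0 wq' prod_eq).
Qed.

Definition Rq_add_Iv i q (x : R) := exists s, Iv v a i.+2 (x - s * q).

Lemma Rq_add_Iv_ideal i q : is_ideal (Rq_add_Iv i q).
Proof.
split; first by exists 0; rewrite mul0r subr0; left.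
- move=> x y [s Ixs] [t Iyt]; exists (s + t).
  by rewrite (_ : _ - _ = (x - s * q) + (y - t * q)); [apply: idealD (Iv_ideal _) Ixs Iyt | ring].
- move=> r x [s Ixs]; exists (r * s).
  by rewrite (_ : _ - _ = r * (x - s * q)); [apply: idealMl (Iv_ideal _) Ixs | ring].
Qed.

Lemma Rq_add_Iv_q i q : Rq_add_Iv i q q.
Proof. by exists 1; rewrite mul1r subrr; left. Qed.

Lemma Rq_add_Iv_Iv i q x : Iv v a i.+2 x -> Rq_add_Iv i q x.
Proof. by exists 0; rewrite mul0r subr0. Qed.

Definition next_scaler i q p := [/\ p != 0, w p = a i.+1 & mul_sub p q (Iv v a i.+2)].

(* [x] maps [Rq + I_(i+2)] into [R]; write [x q = t q + e] with [e] in [I_(i+1)]: then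
   [x - t] maps [I_(i+2)] into itself, so [e] is a scaler unless it lies in [I_(i+2)]. *)
Lemma Rq_add_Iv_trace_closed i q : (i.+2 <= n)%N -> q != 0 -> w q = a i ->
  ~ (exists p, next_scaler i q p) -> trace_closed (Rq_add_Iv i q).
Proof.
move=> le_in q_neq0 wq none x xJ y [s Iys].
have idJ := Rq_add_Iv_ideal i q.
have [->|x_neq0] := eqVneq x 0; first by exists 0; split; [apply: ideal0 | rewrite mul0r emb0].
have vx_ge0 : 0 <= v x.
  by apply: colon_conductor_ge0 => // r Cr; apply/xJ/Rq_add_Iv_Iv/(Iv_mono le_in).
have [r1 xqr1] := xJ q (Rq_add_Iv_q i q).
have Ir1 : Iv v a i r1 by apply: Iv_frac_mul vx_ge0 xqr1 _; right; rewrite wq.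
have [t Ie] := Iv_decomp q_neq0 wq Ir1; set e := r1 - t * q in Ie.
pose x' := x - emb t.
have x'q : x' * emb q = emb e by rewrite /x' mulrBl xqr1 embB embM.
have x'Iv z : Iv v a i.+2 z -> exists r, Iv v a i.+2 r /\ x' * emb z = emb r.
  move=> Iz; have [rz xzr] := xJ z (Rq_add_Iv_Iv q Iz).
  have x'zr : x' * emb z = emb (rz - t * z) by rewrite /x' mulrBl xzr embB embM.
  exists (rz - t * z); split=> //; have [x'0|x'_neq0] := eqVneq x' 0.
    by left; apply: emb_inj; rewrite -x'zr x'0 mul0r emb0.
  have e_neq0 : e != 0 by rewrite -emb_eq0 -x'q mulf_neq0 ?emb_neq0.
  apply: Iv_frac_mul x'zr Iz; have := congr1 v x'q; rewrite valM ?emb_neq0 // wq.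
  by have := Iv_val e_neq0 Ie; have := a_lt (ltnSn i); lia.
have Ie2 : Iv v a i.+2 e.
  apply: (Iv_next Ie) => e_neq0; apply/eqP => we; apply: none; exists e; split=> // z Iz.
  have [r [Ir x'zr]] := x'Iv z Iz; exists r; split=> //; apply: emb_inj.
  by rewrite !embM -x'q -x'zr mulrCA mulrA.
have [r2 [Ir2 x'yr2]] := x'Iv _ Iys.
have Je_r2 : Rq_add_Iv i q (s * e + r2).
  by apply: Rq_add_Iv_Iv; apply: idealD (Iv_ideal _) (idealMl _ (Iv_ideal _) Ie2) Ir2.
exists (t * y + (s * e + r2)); split; first by apply: idealD idJ (idealMl _ idJ _) Je_r2; exists s.
have x'y : x' * emb y = emb (s * e + r2).
  by rewrite -[y](subrK (s * q)) embD mulrDr x'yr2 embM mulrCA x'q -embM addrC -embD.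
have -> : x = x' + emb t by rewrite /x' subrK.
by rewrite mulrDl x'y addrC -embM -embD.
Qed.

Lemma Rq_add_Iv_in_T i q : (i.+2 <= n)%N -> q != 0 -> w q = a i ->
  ~ (exists p, next_scaler i q p) -> in_T (Rq_add_Iv i q).
Proof.
move=> le_in q_neq0 wq none; split; last by exists q; split; [apply: Rq_add_Iv_q | apply/eqP].
apply: trace_closed_is_trace; first exact: Rq_add_Iv_ideal.
  by exists q; split; [apply: Rq_add_Iv_q |].
exact: Rq_add_Iv_trace_closed.
Qed.

(* An ideal [I_j] containing [Rq + I_(i+2)] contains an element [p0] of value [a_(i+1)], and the
   part [s q] of [p0] in [Rq] is a scaler. *)
Lemma scaler_of_trace_Iv i q : (forall J, in_T J -> in_I v a n J) ->
  (i.+2 <= n)%N -> q != 0 -> w q = a i -> exists p, next_scaler i q p.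
Proof.
move=> T_I le_in q_neq0 wq; apply: contrapT => none.
have [j le_jn eJ] := T_I _ (Rq_add_Iv_in_T le_in q_neq0 wq none).
have le_ji : (j <= i)%N by apply: a_le_inv; rewrite -wq Iv_val //; apply/eJ/Rq_add_Iv_q.
have [p0 p0_neq0 wp0] := a_attained i.+1.
have [s Ip0s] : Rq_add_Iv i q p0 by apply/eJ; right; rewrite wp0; apply: a_le; lia.
have [sq_neq0 wsq] := val_sub_Iv_succ p0_neq0 wp0 Ip0s.
apply: none; exists (s * q); split=> // z Iz; exists (s * z); split.
  exact: idealMl (Iv_ideal _) Iz.
by rewrite mulrCA mulrA.
Qed.

Lemma not_prodIv_all : ~ prodIv_all ->
  exists2 i, (i.+2 <= n)%N & forall q, q != 0 -> w q = a i -> ~ exists p, next_scaler i q p.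
Proof.
move=> not_all.
pose bad i := `[< [/\ (1 <= i)%N, (i <= n - 2)%N &
  exists2 q, q != 0 /\ w q = a i & ~ prodIv_eq i q] >].
have [i0 bad_i0] : exists i, bad i.
  apply: contrapT => none; apply: not_all => i i_ge1 i_le q q_neq0 wq.
  by apply: contrapT => nprod; apply: none; exists i; apply/asboolP; split=> //; exists q.
have bad_le i : bad i -> (i <= n)%N by move=> /asboolP [_ + _]; lia.
case: (ex_maxnP (ex_intro _ i0 bad_i0) bad_le) => i /asboolP [i_ge1 i_le].
case=> q0 [q0_neq0 wq0] nprod0 max_i.
have le_in : (i.+3 <= n)%N.
  by rewrite leqNgt; apply: contra_notN nprod0 => lt_ni; apply: prodIv_eq_high => //; lia.
exists i; first by lia.
move=> q q_neq0 wq [p [p_neq0 wp pq]].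
apply: nprod0 (prodIv_eq_indep q_neq0 wq q0_neq0 wq0 _).
apply: (prodIv_eq_step q_neq0 wq p_neq0 wp pq); apply: contrapT => nprod.
have : (i.+1 <= i)%N by apply: max_i; apply/asboolP; split=> //; [lia | exists p].
by rewrite ltnn.
Qed.

Lemma prodIv_all_of_trace : (forall J, in_T J -> in_I v a n J) -> prodIv_all.
Proof.
move=> T_I; apply: contrapT => /not_prodIv_all [i le_in none].
have [q q_neq0 wq] := a_attained i.
exact: none q q_neq0 wq (scaler_of_trace_Iv T_I le_in q_neq0 wq).
Qed.

Lemma Rq_add_Iv_eq_max_ideal i q p0 d : p0 != 0 -> w p0 = a i.+1 ->
  ~ (exists p, next_scaler i q p) ->
  ideal_eq (Rq_add_Iv i (q + d * p0)) (Rq_add_Iv i q) -> max_ideal d.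
Proof.
move=> p0_neq0 wp0 none eJ; apply/negP => d_unit; have [d_neq0 wd] := w_unit d_unit.
have [s Is] : Rq_add_Iv i q (q + d * p0) by apply/eJ/Rq_add_Iv_q.
have wdp0 : w (d * p0) = a i.+1 by rewrite wM // wd wp0 add0r.
have I_dp0 : Iv v a i.+2 (d * p0 - (s - 1) * q).
  by rewrite (_ : _ - _ = q + d * p0 - s * q) //; ring.
have [sq_neq0 wsq] := val_sub_Iv_succ (mulf_neq0 d_neq0 p0_neq0) wdp0 I_dp0.
apply: none; exists ((s - 1) * q); split=> // z Iz; exists ((s - 1) * z); split.
  exact: idealMl (Iv_ideal _) Iz.
by rewrite mulrCA mulrA.
Qed.

(* For [p0] of value [a_(i+1)], the trace ideals [R(q + r p0) + I_(i+2)] are pairwise distinct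
   for [r] in distinct residue classes. *)
Lemma prodIv_all_of_T_finite : residue_field_infinite R -> T_finite R -> prodIv_all.
Proof.
move=> k_infinite [k [Js Js_cover]]; apply: contrapT => /not_prodIv_all [i le_in none].
have [q q_neq0 wq] := a_attained i; have [p0 p0_neq0 wp0] := a_attained i.+1.
pose qq r := q + r * p0.
have qqP r : qq r != 0 /\ w (qq r) = a i.
  apply: val_sub_Iv_succ q_neq0 wq _; rewrite /qq opprD addrA subrr add0r.
  by apply: idealN (Iv_ideal _) (idealMl _ (Iv_ideal _) _); right; rewrite wp0.
have qqT r : in_T (Rq_add_Iv i (qq r)).
  by have [qq_neq0 wqq] := qqP r; apply: Rq_add_Iv_in_T le_in qq_neq0 wqq (none _ qq_neq0 wqq).
have /fin_all_exists [lam lamP] j : exists l,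
    (exists r, ideal_eq (Rq_add_Iv i (qq r)) (Js j)) -> ideal_eq (Rq_add_Iv i (qq l)) (Js j).
  case: (pselect (exists r, ideal_eq (Rq_add_Iv i (qq r)) (Js j))) => [[r er]|none_r].
    by exists r.
  by exists 0.
apply: k_infinite; exists [seq lam j | j <- enum 'I_k] => r.
have [j ej] := Js_cover _ (qqT r).
exists (lam j); first by apply: map_f; rewrite mem_enum.
have [ql_neq0 wql] := qqP (lam j).
apply: Rq_add_Iv_eq_max_ideal p0_neq0 wp0 (none _ ql_neq0 wql) _ => x.
rewrite (_ : qq (lam j) + _ = qq r); last by rewrite /qq; ring.
exact: iff_trans (ej x) (iff_sym (lamP j (ex_intro _ r ej) x)).
Qed.

Lemma T_finite_of_trace : (forall J, in_T J <-> in_I v a n J) -> T_finite R.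
Proof.
move=> T_I; exists n.+1, (fun j : 'I_n.+1 => Iv v a j) => J /T_I [i le_in eJ].
by exists (Ordinal (le_in : (i < n.+1)%N)).
Qed.

Lemma prodIv_all_iff_some : prodIv_all <-> forall i, (1 <= i)%N -> (i <= n - 2)%N ->
  exists q, [/\ q != 0, w q = a i &
    ideal_eq (ideal_mul (Iv v a i) (Iv v a i.+2)) (elem_mul q (Iv v a i.+2))].
Proof.
split=> [prod_all i i_ge1 i_le | some i i_ge1 i_le q q_neq0 wq].
  have [q q_neq0 wq] := a_attained i; exists q; split=> //.
  by apply/prodIv_eqP; [right; rewrite wq | apply: prod_all].
have [q0 [q0_neq0 wq0 /prodIv_eqP prod_eq]] := some i i_ge1 i_le.
apply: (prodIv_eq_indep q0_neq0 wq0 q_neq0 wq (prod_eq _)).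
by right; rewrite wq0.
Qed.

Lemma prodIv_all_iff_every : prodIv_all <-> forall i, (1 <= i)%N -> (i <= n - 2)%N ->
  forall q, q != 0 -> w q = a i ->
    ideal_eq (ideal_mul (Iv v a i) (Iv v a i.+2)) (elem_mul q (Iv v a i.+2)).
Proof.
split=> [prod_all | every] i i_ge1 i_le q q_neq0 wq.
  by apply/prodIv_eqP; [right; rewrite wq | apply: prod_all].
by apply/prodIv_eqP; [right; rewrite wq | apply: every].
Qed.

Lemma trace_eq_Iv_iff : (forall J, in_T J <-> in_I v a n J) <-> prodIv_all.
Proof.
split=> [T_I | prod_all J]; first by apply: prodIv_all_of_trace => J /T_I.
by split; [apply: trace_ideal_is_Iv | apply: in_I_T].
Qed.

Lemma trace_eq_Iv_iff_finite : residue_field_infinite R ->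
  (forall J, in_T J <-> in_I v a n J) <-> T_finite R.
Proof.
move=> k_infinite; split; first exact: T_finite_of_trace.
by move=> /(prodIv_all_of_T_finite k_infinite)/trace_eq_Iv_iff.
Qed.

End ValueSemigroup.

Unset Implicit Arguments.

Theorem theorem3p8 (R : idomainType) (v : QR R -> int) (a : nat -> int) (n : nat)
  (Hnoeth : noetherian R) (Hloc : local_ring R) (Hdim : krull_dim_one R)
  (Hfin : Rbar_finite R) (HRbarloc : Rbar_local R) (Hres : residue_iso R)
  (Hv : normalized_valuation_of_Rbar v) (Ha : enumerates_H v a)
  (Hn : conductor_index a n) (Hn3 : (3 <= n)%N) :
  let c1 := forall I : R -> Prop, in_T I <-> in_I v a n I in
  let c2 := forall i, (1 <= i)%N -> (i <= n - 2)%N ->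
              exists q : R, [/\ q != 0, v (emb q) = a i &
                ideal_eq (ideal_mul (Iv v a i) (Iv v a i.+2)) (elem_mul q (Iv v a i.+2))] in
  let c3 := forall i, (1 <= i)%N -> (i <= n - 2)%N -> forall q : R,
              q != 0 -> v (emb q) = a i ->
                ideal_eq (ideal_mul (Iv v a i) (Iv v a i.+2)) (elem_mul q (Iv v a i.+2)) in
  let c4 := T_finite R in
  [/\ c1 <-> c2, c1 <-> c3 & (residue_field_infinite R -> (c1 <-> c4))].
Proof.
move=> c1 c2 c3 c4.
have c1_prod : c1 <-> prodIv_all v a n := trace_eq_Iv_iff Hfin Hres Hv Ha Hn.
split.
- exact: iff_trans c1_prod (prodIv_all_iff_some Hfin Hres Hv Ha Hn).
- exact: iff_trans c1_prod (prodIv_all_iff_every n Hv Ha).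
- exact: trace_eq_Iv_iff_finite Hfin Hres Hv Ha Hn.
Qed.
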